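(* Let $W\in\mathbb{D}_n$ satisfy the Ground Assumption and let $\sigma\subset\mathcal{E}$. Then $\sigma\in\mathcal{C}(W)$ if and only if $\sigma\sqcup\mathcal{I}\in FP(W)$.
   Context: Threshold-linear network: $\dot x_i=-x_i+[\sum_j W_{ij}x_j+b_i]_+$ with $[y]_+=\max(0,y)$; a fixed point is $x^*$ with $x^*=[Wx^*+b]_+$. A Dale matrix $W\in\mathbb{D}_n$ is an $n\times n$ real matrix with a partition $[n]=\mathcal{E}\sqcup\mathcal{I}$ such that $W_{ii}=0$, $W_{ji}\ge0$ for all $j$ if $i\in\mathcal{E}$, $W_{ji}\le0$ for all $j$ if $i\in\mathcal{I}$. Ground Assumption: $(I-W)_\sigma$ nonsingular for every nonempty $\sigma\subset[n]$. Excitatory support: $\mathrm{supp}_+x=\{i\in\mathcal{E}:x_i>0\}$. Combinatorial code: $\mathcal{C}(W)=\{\mathrm{supp}_+x^*: b\in\mathbb{R}^n_{\ge0},\ x^*\in\mathbb{R}^n_{\ge0}\text{ a fixed point of }(W,b)\}$. $FP(W,b)$ is the set of supports $\{i\in[n]:x^*_i>0\}$ of all fixed points $x^*$ of $(W,b)$, and $FP(W)=\bigcup_{b\in\mathbb{R}^n_{\ge0}}FP(W,b)$. *)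

From HB Require Import structures.
From mathcomp Require Import all_boot all_order all_algebra.
Set Implicit Arguments. Unset Strict Implicit. Unset Printing Implicit Defensive.
Import Order.TTheory GRing.Theory Num.Theory.
Local Open Scope ring_scope.

Section TLN.
Variables (R : realFieldType) (n : nat).

(* W is a Dale matrix with excitatory set E (inhibitory set = ~: E):
   zero diagonal, columns of excitatory neurons nonnegative,
   columns of inhibitory neurons nonpositive. *)
Definition is_Dale (W : 'M[R]_n) (E : {set 'I_n}) : Prop :=
  (forall i, W i i = 0) /\
  (forall i, i \in E -> forall j, 0 <= W j i) /\
  (forall i, i \notin E -> forall j, W j i <= 0).

Definition principal_submx (A : 'M[R]_n) (s : {set 'I_n}) : 'M[R]_#|s| :=
  \matrix_(i < #|s|, j < #|s|) A (enum_val i) (enum_val j).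

Definition ground_assumption (W : 'M[R]_n) : Prop :=
  forall s : {set 'I_n}, s != set0 ->
    principal_submx (1%:M - W) s \in unitmx.

Definition is_fixed_point (W : 'M[R]_n) (b x : 'I_n -> R) : Prop :=
  forall i, x i = Num.max 0 (\sum_j W i j * x j + b i).

Definition supp (x : 'I_n -> R) : {set 'I_n} := [set i | 0 < x i].

Definition supp_plus (E : {set 'I_n}) (x : 'I_n -> R) : {set 'I_n} :=
  [set i in E | 0 < x i].

Definition nonneg (v : 'I_n -> R) : Prop := forall i, 0 <= v i.

Definition in_FPb (W : 'M[R]_n) (b : 'I_n -> R) (s : {set 'I_n}) : Prop :=
  exists x, is_fixed_point W b x /\ supp x = s.

Definition in_FP (W : 'M[R]_n) (s : {set 'I_n}) : Prop :=
  exists b, nonneg b /\ in_FPb W b s.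

Definition in_code (W : 'M[R]_n) (E : {set 'I_n}) (s : {set 'I_n}) : Prop :=
  exists b x, nonneg b /\ nonneg x /\ is_fixed_point W b x /\ supp_plus E x = s.

End TLN.

From HB Require Import structures.
From mathcomp Require Import all_boot all_order all_algebra.
Set Implicit Arguments. Unset Strict Implicit. Unset Printing Implicit Defensive.
Import Order.TTheory GRing.Theory Num.Theory.
Local Open Scope ring_scope.

(* If [x] is a nonnegative fixed point with [supp_+ x = sigma], adding [1] on
   every inhibitory neuron can only lower the recurrent input, since inhibitory
   columns of [W] are nonpositive.  Hence [x + 1_I] is still a fixed point once
   the input is raised on its support to absorb the difference, and its support
   is [sigma :|: I].  Conversely the excitatory part of the support of any fixed
   point of a nonnegative input lies in [C(W)]. *)

Section FixedPoints.
Variables (R : realFieldType) (n : nat) (W : 'M[R]_n).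

Definition drive (x : 'I_n -> R) (i : 'I_n) : R := \sum_j W i j * x j.

Lemma driveD (x y : 'I_n -> R) i :
  drive (fun j => x j + y j) i = drive x i + drive y i.
Proof. by rewrite /drive -big_split; apply: eq_bigr => j _; rewrite mulrDr. Qed.

Lemma fixed_point_ge0 b x : is_fixed_point W b x -> nonneg x.
Proof. by move=> fx i; rewrite fx le_max lexx. Qed.

Lemma fixed_point_input_le b x i :
  is_fixed_point W b x -> drive x i + b i <= x i.
Proof. by move=> fx; rewrite [in X in _ <= X]fx le_max lexx orbT. Qed.

Lemma fixed_point_input_le0 b x i :
  is_fixed_point W b x -> x i = 0 -> drive x i + b i <= 0.
Proof. by move=> fx xi0; rewrite -xi0 fixed_point_input_le. Qed.

Lemma supp_addr (x y : 'I_n -> R) : nonneg x -> nonneg y ->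
  supp (fun i => x i + y i) = supp x :|: supp y.
Proof.
move=> x0 y0; apply/setP=> i; rewrite !inE.
have [xi_gt0 | ] := ltrP 0 (x i); first by rewrite ltr_pwDl.
by rewrite le_eqVlt ltNge x0 orbF => /eqP ->; rewrite add0r.
Qed.

Lemma in_FP_addr_nonpos_drive b x v :
    nonneg b -> is_fixed_point W b x ->
    nonneg v -> (forall i, drive v i <= 0) ->
  in_FP W (supp x :|: supp v).
Proof.
move=> b0 fx v0 Wv_le0; have x0 := fixed_point_ge0 fx.
pose y i := x i + v i.
have drive_y_le i : drive y i <= x i.
  rewrite driveD -[x i]addr0 lerD ?Wv_le0 //.
  by rewrite (le_trans _ (fixed_point_input_le i fx)) // lerDl.
exists (fun i => if 0 < y i then y i - drive y i else b i); split.
  move=> i; case: ifP => // _.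
  by rewrite subr_ge0 (le_trans (drive_y_le i)) // lerDl.
exists y; split; last by rewrite supp_addr.
move=> i; case: ifPn => [y_gt0 | ].
  by rewrite addrC subrK; apply/esym/max_idPr/ltW.
have yi_ge0 : 0 <= y i by rewrite addr_ge0.
rewrite -leNgt => yi_le0; have yi0 : y i = 0 by apply/eqP; rewrite eq_le yi_le0.
have xi0 : x i = 0 by apply/eqP; rewrite eq_le x0 andbT -yi0 lerDl v0.
rewrite yi0; apply/esym/max_idPl.
rewrite -/(drive y i) driveD addrAC -[0]addr0 lerD ?Wv_le0 //.
exact: fixed_point_input_le0 fx xi0.
Qed.

End FixedPoints.

Section Dale.
Variables (R : realFieldType) (n : nat) (W : 'M[R]_n) (E : {set 'I_n}).

Definition inhibitory_indicator (i : 'I_n) : R := (i \notin E)%:R.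

Lemma supp_inhibitory_indicator : supp inhibitory_indicator = ~: E.
Proof.
apply/setP=> i; rewrite !inE /inhibitory_indicator.
by case: (i \in E); rewrite ?ltr01 ?ltxx.
Qed.

Lemma Dale_drive_inhibitory_le0 i :
  is_Dale W E -> drive W inhibitory_indicator i <= 0.
Proof.
move=> [_ [_ WI]]; apply: sumr_le0 => j _; rewrite /inhibitory_indicator.
by case: (boolP (j \in E)) => jE; rewrite ?mulr0 ?mulr1 ?WI.
Qed.

Lemma supp_plusE (x : 'I_n -> R) : supp_plus E x = supp x :&: E.
Proof. by apply/setP=> i; rewrite !inE andbC. Qed.

End Dale.

Theorem mainTheorem13 (R : realFieldType) (n : nat) (W : 'M[R]_n)
    (E : {set 'I_n}) (sigma : {set 'I_n}) :
  is_Dale W E -> ground_assumption W -> sigma \subset E ->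
  (in_code W E sigma <-> in_FP W (sigma :|: ~: E)).
Proof.
move=> DaleW _ sE; split.
- move=> [b [x [b0 [_ [fx <-]]]]].
  have -> : supp_plus E x :|: ~: E = supp x :|: supp (inhibitory_indicator R E).
    by rewrite supp_plusE supp_inhibitory_indicator setUIl setUCr setIT.
  apply: in_FP_addr_nonpos_drive b0 fx _ _ => [i | i].
    by rewrite /inhibitory_indicator ler0n.
  exact: Dale_drive_inhibitory_le0.
- move=> [b [b0 [x [fx sx]]]].
  exists b, x; split=> //; split; first exact: fixed_point_ge0 fx.
  split=> //; rewrite supp_plusE sx setIUl [~: E :&: E]setIC setICr setU0.
  exact/setIidPl.
Qed.
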